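(* Let $(A,\mu,\Delta,\alpha,\beta,\psi,\omega)$ be an infinitesimal BiHom-bialgebra, with notation $\mu(a\otimes b)=a\cdot b$ and $\Delta(a)=a_1\otimes a_2$. Define a new multiplication on $A$ by \[ a\ast b=\alpha\beta^{2}\psi(b_{1})\cdot\big[\alpha(a)\cdot\alpha^{2}\omega(b_{2})\big]=\big[\beta^{2}\psi(b_{1})\cdot\alpha(a)\big]\cdot\alpha^{2}\beta\omega(b_{2}),\qquad a,b\in A. \] Then $(A,\ast,\alpha^{2}\beta,\alpha^{2}\beta^{2}\psi\omega)$ is a left BiHom-pre-Lie algebra.
   Context: Work over a field $\Bbbk$. A BiHom-associative algebra is a 4-tuple $(A,\mu,\alpha,\beta)$ with $A$ a linear space, $\mu:A\otimes A\to A$ (written $x\cdot y$) and $\alpha,\beta:A\to A$ linear maps such that $\alpha\beta=\beta\alpha$, $\alpha(x\cdot y)=\alpha(x)\cdot\alpha(y)$, $\beta(x\cdot y)=\beta(x)\cdot\beta(y)$ and $\alpha(x)\cdot(y\cdot z)=(x\cdot y)\cdot\beta(z)$ for all $x,y,z$. A BiHom-coassociative coalgebra is a 4-tuple $(C,\Delta,\psi,\omega)$ with $\Delta:C\to C\otimes C$ and $\psi,\omega:C\to C$ linear, $\psi\omega=\omega\psi$, $(\psi\otimes\psi)\Delta=\Delta\psi$, $(\omega\otimes\omega)\Delta=\Delta\omega$ and $(\Delta\otimes\psi)\Delta=(\omega\otimes\Delta)\Delta$. An infinitesimal BiHom-bialgebra is a 7-tuple $(A,\mu,\Delta,\alpha,\beta,\psi,\omega)$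 such that $(A,\mu,\alpha,\beta)$ is a BiHom-associative algebra, $(A,\Delta,\psi,\omega)$ is a BiHom-coassociative coalgebra, and for all $a,b\in A$: $\Delta(a\cdot b)=\omega(a)\cdot b_1\otimes\beta(b_2)+\alpha(a_1)\otimes a_2\cdot\psi(b)$; $\alpha\psi=\psi\alpha$, $\alpha\omega=\omega\alpha$, $\beta\psi=\psi\beta$, $\beta\omega=\omega\beta$; $(\alpha\otimes\alpha)\Delta=\Delta\alpha$, $(\beta\otimes\beta)\Delta=\Delta\beta$; $\psi(a\cdot b)=\psi(a)\cdot\psi(b)$, $\omega(a\cdot b)=\omega(a)\cdot\omega(b)$. A left BiHom-pre-Lie algebra is a 4-tuple $(A,\mu,\alpha,\beta)$ with $\alpha\beta=\beta\alpha$, $\alpha,\beta$ multiplicative for $\mu$, and $\alpha\beta(x)\cdot(\alpha(y)\cdot z)-(\beta(x)\cdot\alpha(y))\cdot\beta(z)=\alpha\beta(y)\cdot(\alpha(x)\cdot z)-(\beta(y)\cdot\alpha(x))\cdot\beta(z)$ for all $x,y,z$. Algebras and coalgebras are not assumed (co)unital. *)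

(* Tensors in A (x) A are represented by finite lists of pure tensors
   (Sweedler expansions); equality of tensors is expressed through the
   universal property: two expansions are equal iff every bilinear map
   into every K-vector space V takes the same value on them. *)
From HB Require Import structures.
From mathcomp Require Import all_boot all_order all_algebra.
Set Implicit Arguments. Unset Strict Implicit. Unset Printing Implicit Defensive.
Import GRing.Theory.
Local Open Scope ring_scope.

Section BiHom.
Variables (K : fieldType) (A : lmodType K).

Definition linmap (f : A -> A) : Prop :=
  forall (k : K) (x y : A), f (k *: x + y) = k *: f x + f y.

Definition bilinmap (V : lmodType K) (f : A -> A -> V) : Prop :=
  (forall (k : K) (x x' y : A), f (k *: x + x') y = k *: f x y + f x' y) /\
  (forall (k : K) (x y y' : A), f x (k *: y + y') = k *: f x y + f x y').

Definition trilinmap (V : lmodType K) (h : A -> A -> A -> V) : Prop :=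
  (forall (k : K) x x' y z, h (k *: x + x') y z = k *: h x y z + h x' y z) /\
  (forall (k : K) x y y' z, h x (k *: y + y') z = k *: h x y z + h x y' z) /\
  (forall (k : K) x y z z', h x y (k *: z + z') = k *: h x y z + h x y z').

(* the image of the tensor  sum_{p in s} p.1 (x) p.2  under the linear map
   A (x) A -> V induced by the bilinear map f *)
Definition tsum (V : lmodType K) (f : A -> A -> V) (s : seq (A * A)) : V :=
  \sum_(p <- s) f p.1 p.2.

Record BiHomAssoc (mu : A -> A -> A) (al be : A -> A) : Prop := {
  bha_mu_bilin : bilinmap mu;
  bha_al_lin : linmap al;
  bha_be_lin : linmap be;
  bha_comm : forall x, al (be x) = be (al x);
  bha_al_mul : forall x y, al (mu x y) = mu (al x) (al y);
  bha_be_mul : forall x y, be (mu x y) = mu (be x) (be y);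
  bha_assoc : forall x y z, mu (al x) (mu y z) = mu (mu x y) (be z)
}.

(* BiHom-coassociative coalgebra (A, Delta, ps, om); Delta a is given by a
   Sweedler expansion D a = [:: (a_1, a_2); ...] *)
Record BiHomCoassoc (D : A -> seq (A * A)) (ps om : A -> A) : Prop := {
  bhc_D_lin : forall (V : lmodType K) (f : A -> A -> V), bilinmap f ->
    forall (k : K) (x y : A),
      tsum f (D (k *: x + y)) = k *: tsum f (D x) + tsum f (D y);
  bhc_ps_lin : linmap ps;
  bhc_om_lin : linmap om;
  bhc_comm : forall x, ps (om x) = om (ps x);
  bhc_ps_D : forall (V : lmodType K) (f : A -> A -> V), bilinmap f ->
    forall a, tsum (fun l r => f (ps l) (ps r)) (D a) = tsum f (D (ps a));
  bhc_om_D : forall (V : lmodType K) (f : A -> A -> V), bilinmap f ->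
    forall a, tsum (fun l r => f (om l) (om r)) (D a) = tsum f (D (om a));
  (* (Delta (x) ps) Delta = (om (x) Delta) Delta *)
  bhc_coassoc : forall (V : lmodType K) (h : A -> A -> A -> V), trilinmap h ->
    forall a,
      \sum_(p <- D a) tsum (fun l r => h l r (ps p.2)) (D p.1) =
      \sum_(p <- D a) tsum (fun l r => h (om p.1) l r) (D p.2)
}.

Record InfBiHomBialg (mu : A -> A -> A) (D : A -> seq (A * A))
    (al be ps om : A -> A) : Prop := {
  ibb_alg : BiHomAssoc mu al be;
  ibb_coalg : BiHomCoassoc D ps om;
  (* Delta(a b) = om(a) b_1 (x) be(b_2) + al(a_1) (x) a_2 ps(b) *)
  ibb_leibniz : forall (V : lmodType K) (f : A -> A -> V), bilinmap f ->
    forall a b, tsum f (D (mu a b)) =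
      tsum (fun l r => f (mu (om a) l) (be r)) (D b) +
      tsum (fun l r => f (al l) (mu r (ps b))) (D a);
  ibb_al_ps : forall x, al (ps x) = ps (al x);
  ibb_al_om : forall x, al (om x) = om (al x);
  ibb_be_ps : forall x, be (ps x) = ps (be x);
  ibb_be_om : forall x, be (om x) = om (be x);
  ibb_al_D : forall (V : lmodType K) (f : A -> A -> V), bilinmap f ->
    forall a, tsum (fun l r => f (al l) (al r)) (D a) = tsum f (D (al a));
  ibb_be_D : forall (V : lmodType K) (f : A -> A -> V), bilinmap f ->
    forall a, tsum (fun l r => f (be l) (be r)) (D a) = tsum f (D (be a));
  ibb_ps_mul : forall x y, ps (mu x y) = mu (ps x) (ps y);
  ibb_om_mul : forall x y, om (mu x y) = mu (om x) (om y)
}.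

Record LeftBiHomPreLie (mu : A -> A -> A) (al be : A -> A) : Prop := {
  bpl_mu_bilin : bilinmap mu;
  bpl_al_lin : linmap al;
  bpl_be_lin : linmap be;
  bpl_comm : forall x, al (be x) = be (al x);
  bpl_al_mul : forall x y, al (mu x y) = mu (al x) (al y);
  bpl_be_mul : forall x y, be (mu x y) = mu (be x) (be y);
  bpl_prelie : forall x y z,
    mu (al (be x)) (mu (al y) z) - mu (mu (be x) (al y)) (be z) =
    mu (al (be y)) (mu (al x) z) - mu (mu (be y) (al x)) (be z)
}.

Definition star (mu : A -> A -> A) (D : A -> seq (A * A))
    (al be ps om : A -> A) (a b : A) : A :=
  tsum (fun l r => mu (al (be (be (ps l)))) (mu (al a) (al (al (om r))))) (D b).

End BiHom.

From HB Require Import structures.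
From mathcomp Require Import all_boot all_order all_algebra.
Set Implicit Arguments. Unset Strict Implicit. Unset Printing Implicit Defensive.
Import GRing.Theory.
Local Open Scope ring_scope.

(* Write al' := al^2 be and be' := al^2 be^2 ps om.  Expanding
   al'be'(x) * (al'(y) * z) with the Leibniz rule for Delta applied twice
   gives three Sweedler sums: one is (be'(x) * al'(y)) * be'(z), and the other
   two are read off the iterated coproduct of z, once in the form
   (om (x) Delta) Delta z and once in the form (Delta (x) ps) Delta z.
   BiHom-coassociativity identifies each of these with the other one after
   exchanging x and y, so the associator is symmetric in x and y. *)

Section LinearSums.
Variables (K : fieldType) (U V : lmodType K) (f : U -> V).
Hypothesis f_lin : forall k x y, f (k *: x + y) = k *: f x + f y.

Lemma lin0 : f 0 = 0.
Proof.
have f00 := f_lin 1 0 0; rewrite !scale1r addr0 in f00.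
by apply: (@addrI _ (f 0)); rewrite addr0 -f00.
Qed.

Lemma linD x y : f (x + y) = f x + f y.
Proof. by have := f_lin 1 x y; rewrite !scale1r. Qed.

Lemma lin_sum (I : Type) (s : seq I) (F : I -> U) :
  f (\sum_(i <- s) F i) = \sum_(i <- s) f (F i).
Proof.
elim: s => [|i s IHs]; first by rewrite !big_nil lin0.
by rewrite !big_cons linD IHs.
Qed.

End LinearSums.

Section InfBiHomBialgebra.
Variables (K : fieldType) (A : lmodType K)
    (mu : A -> A -> A) (D : A -> seq (A * A)) (al be ps om : A -> A).
Hypothesis H : InfBiHomBialg mu D al be ps om.

Let HA := ibb_alg H.
Let HC := ibb_coalg H.

Lemma mu_linl k x x' y : mu (k *: x + x') y = k *: mu x y + mu x' y.
Proof. exact: (bha_mu_bilin HA).1. Qed.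
Lemma mu_linr k x y y' : mu x (k *: y + y') = k *: mu x y + mu x y'.
Proof. exact: (bha_mu_bilin HA).2. Qed.
Lemma al_lin k x y : al (k *: x + y) = k *: al x + al y.
Proof. exact: (bha_al_lin HA). Qed.
Lemma be_lin k x y : be (k *: x + y) = k *: be x + be y.
Proof. exact: (bha_be_lin HA). Qed.
Lemma ps_lin k x y : ps (k *: x + y) = k *: ps x + ps y.
Proof. exact: (bhc_ps_lin HC). Qed.
Lemma om_lin k x y : om (k *: x + y) = k *: om x + om y.
Proof. exact: (bhc_om_lin HC). Qed.

Ltac linpush :=
  repeat progress rewrite ?mu_linl ?mu_linr ?al_lin ?be_lin ?ps_lin ?om_lin.
Ltac bilin := split => ? ? ? ? /=; linpush; reflexivity.
Ltac trilin := split; [|split] => ? ? ? ? ? /=; linpush; reflexivity.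

Lemma mu_suml (s : seq (A * A)) (F : A * A -> A) y :
  mu (\sum_(i <- s) F i) y = \sum_(i <- s) mu (F i) y.
Proof. by apply: (lin_sum (f := mu^~ y)) => k a b; rewrite mu_linl. Qed.
Lemma mu_sumr (s : seq (A * A)) (F : A * A -> A) y :
  mu y (\sum_(i <- s) F i) = \sum_(i <- s) mu y (F i).
Proof. by apply: lin_sum => k a b; rewrite mu_linr. Qed.

Ltac sumpush := repeat progress rewrite ?(lin_sum al_lin) ?(lin_sum be_lin)
  ?(lin_sum ps_lin) ?(lin_sum om_lin) ?mu_suml ?mu_sumr.

Lemma alM x y : al (mu x y) = mu (al x) (al y). Proof. exact: (bha_al_mul HA). Qed.
Lemma beM x y : be (mu x y) = mu (be x) (be y). Proof. exact: (bha_be_mul HA). Qed.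
Lemma psM x y : ps (mu x y) = mu (ps x) (ps y). Proof. exact: (ibb_ps_mul H). Qed.
Lemma omM x y : om (mu x y) = mu (om x) (om y). Proof. exact: (ibb_om_mul H). Qed.

Lemma al_be x : al (be x) = be (al x). Proof. exact: (bha_comm HA). Qed.
Lemma ps_be x : ps (be x) = be (ps x). Proof. by rewrite (ibb_be_ps H). Qed.
Lemma om_be x : om (be x) = be (om x). Proof. by rewrite (ibb_be_om H). Qed.
Lemma ps_al x : ps (al x) = al (ps x). Proof. by rewrite (ibb_al_ps H). Qed.
Lemma om_al x : om (al x) = al (om x). Proof. by rewrite (ibb_al_om H). Qed.
Lemma om_ps x : om (ps x) = ps (om x). Proof. by rewrite (bhc_comm HC). Qed.

Lemma mu_assoc x y z : mu (mu x y) (be z) = mu (al x) (mu y z).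
Proof. by rewrite (bha_assoc HA). Qed.

(* [norm] pushes [be] into products, so associativity must also be
   recognised after [be z] has been distributed over [z = c d] or [z = c (d e)]. *)
Lemma mu_assoc2 x y c d : mu (mu x y) (mu (be c) (be d)) = mu (al x) (mu y (mu c d)).
Proof. by rewrite -beM mu_assoc. Qed.
Lemma mu_assoc3 x y c d e :
  mu (mu x y) (mu (be c) (mu (be d) (be e))) = mu (al x) (mu y (mu c (mu d e))).
Proof. by rewrite -!beM mu_assoc. Qed.

Ltac norm := repeat progress rewrite ?alM ?beM ?psM ?omM
  ?al_be ?ps_be ?om_be ?ps_al ?om_al ?om_ps ?mu_assoc ?mu_assoc2 ?mu_assoc3.

Lemma D_al (V : lmodType K) (f : A -> A -> V) a : bilinmap f ->
  tsum f (D (al a)) = tsum (fun l r => f (al l) (al r)) (D a).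
Proof. by move=> f_bilin; rewrite (ibb_al_D H f_bilin). Qed.
Lemma D_be (V : lmodType K) (f : A -> A -> V) a : bilinmap f ->
  tsum f (D (be a)) = tsum (fun l r => f (be l) (be r)) (D a).
Proof. by move=> f_bilin; rewrite (ibb_be_D H f_bilin). Qed.
Lemma D_ps (V : lmodType K) (f : A -> A -> V) a : bilinmap f ->
  tsum f (D (ps a)) = tsum (fun l r => f (ps l) (ps r)) (D a).
Proof. by move=> f_bilin; rewrite (bhc_ps_D HC f_bilin). Qed.
Lemma D_om (V : lmodType K) (f : A -> A -> V) a : bilinmap f ->
  tsum f (D (om a)) = tsum (fun l r => f (om l) (om r)) (D a).
Proof. by move=> f_bilin; rewrite (bhc_om_D HC f_bilin). Qed.

Ltac Dpush := repeat first
  [ rewrite D_al; last by bilin | rewrite D_be; last by bilin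
  | rewrite D_ps; last by bilin | rewrite D_om; last by bilin ].

Lemma D_leibniz (V : lmodType K) (f : A -> A -> V) a b : bilinmap f ->
  tsum f (D (mu a b)) =
    tsum (fun l r => f (mu (om a) l) (be r)) (D b) +
    tsum (fun l r => f (al l) (mu r (ps b))) (D a).
Proof. by move=> f_bilin; rewrite (ibb_leibniz H f_bilin). Qed.

Lemma D_sum (V : lmodType K) (f : A -> A -> V) (I : Type) (s : seq I) (F : I -> A) :
  bilinmap f -> tsum f (D (\sum_(i <- s) F i)) = \sum_(i <- s) tsum f (D (F i)).
Proof.
by move=> f_bilin; apply: (lin_sum (f := fun a => tsum f (D a))); apply: (bhc_D_lin HC).
Qed.

Local Notation st := (star mu D al be ps om).
Local Notation al' x := (al (al (be x))).
Local Notation be' x := (al (al (be (be (ps (om x)))))).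

Lemma starE a b :
  st a b = tsum (fun l r => mu (mu (be (be (ps l))) (al a)) (al (al (be (om r))))) (D b).
Proof. by apply: eq_bigr => p _; norm. Qed.

Lemma star_bilin : bilinmap st.
Proof.
split=> [k x x' y | k x y y'].
  rewrite /star /tsum scaler_sumr -big_split.
  by apply: eq_bigr => p _ /=; linpush.
by apply: (bhc_D_lin HC); bilin.
Qed.

Lemma al'_be' x : al' (be' x) = be' (al' x).
Proof. by norm. Qed.

Lemma al'_star a b : al' (st a b) = st (al' a) (al' b).
Proof.
rewrite /star; Dpush; rewrite /tsum; sumpush.
by apply: eq_bigr => p _; norm.
Qed.

Lemma be'_star a b : be' (st a b) = st (be' a) (be' b).
Proof.
rewrite /star; Dpush; rewrite /tsum; sumpush.
by apply: eq_bigr => p _; norm.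
Qed.

(* The [norm]al form of the Leibniz terms of [star_associator] in which [z]
   is split twice, [a (x) b (x) c] ranging over its iterated coproduct. *)
Definition cross_summand x y a b c :=
  mu (mu (al (al (be (be (be (be (ps (ps a))))))))
         (mu (al (al (al (al (be (be (be (ps (om y)))))))))
             (al (al (al (be (be (ps (om b)))))))))
     (mu (al (al (al (al (al (be (be (be (ps (om x))))))))))
         (al (al (al (al (be (be (om (om c))))))))).

Definition cross_term x y z :=
  \sum_(p <- D z) tsum (fun l r => cross_summand x y (om p.1) l r) (D p.2).

Lemma cross_term_coassoc x y z :
  cross_term x y z =
  \sum_(p <- D z) tsum (fun l r => cross_summand x y l r (ps p.2)) (D p.1).
Proof. by symmetry; apply: (bhc_coassoc HC); rewrite /cross_summand; trilin. Qed.

Lemma star_associator x y z :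
  st (al' (be' x)) (st (al' y) z) =
  st (st (be' x) (al' y)) (be' z) + (cross_term x y z + cross_term y x z).
Proof.
have -> : st (al' (be' x)) (st (al' y) z) = \sum_(p <- D z)
    tsum (fun l r => mu (al (be (be (ps l)))) (mu (al (al' (be' x))) (al (al (om r)))))
      (D (mu (al (be (be (ps p.1)))) (mu (al (al' y)) (al (al (om p.2)))))).
  by rewrite /star D_sum //; bilin.
have -> : st (st (be' x) (al' y)) (be' z) = \sum_(p <- D z) \sum_(q <- D y)
    mu (al (be (be (ps (be' p.1)))))
       (mu (al (mu (al (be (be (ps (al' q.1))))) (mu (al (be' x)) (al (al (om (al' q.2)))))))
           (al (al (om (be' p.2))))).
  rewrite /star; Dpush; rewrite /tsum; by apply: eq_bigr => p _; sumpush.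
rewrite [cross_term y x z]cross_term_coassoc /cross_term -!big_split.
apply: eq_bigr => p _ /=.
rewrite D_leibniz; last by bilin.
rewrite D_leibniz; last by bilin.
Dpush; rewrite [LHS]addrAC [LHS]addrC.
by congr (_ + (_ + _)); apply: eq_bigr => q _; rewrite /cross_summand; norm.
Qed.

Lemma star_prelie x y z :
  st (al' (be' x)) (st (al' y) z) - st (st (be' x) (al' y)) (be' z) =
  st (al' (be' y)) (st (al' x) z) - st (st (be' y) (al' x)) (be' z).
Proof. by rewrite !star_associator !(addrC (st _ _)) !addrK addrC. Qed.

End InfBiHomBialgebra.

Theorem theorem4p6 (K : fieldType) (A : lmodType K)
    (mu : A -> A -> A) (D : A -> seq (A * A)) (al be ps om : A -> A) :
  InfBiHomBialg mu D al be ps om ->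
  (forall a b : A,
     star mu D al be ps om a b =
     tsum (fun l r => mu (mu (be (be (ps l))) (al a)) (al (al (be (om r))))) (D b)) /\
  LeftBiHomPreLie (star mu D al be ps om)
    (fun x => al (al (be x)))
    (fun x => al (al (be (be (ps (om x)))))).
Proof.
move=> H; split; first exact: starE.
split=> [||||x y|x y|x y z] /=.
- exact: (star_bilin H).
- by move=> k x y; rewrite (be_lin H) !(al_lin H).
- by move=> k x y; rewrite (om_lin H) (ps_lin H) !(be_lin H) !(al_lin H).
- exact: (al'_be' H).
- exact: (al'_star H).
- exact: (be'_star H).
- exact: (star_prelie H).
Qed.
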